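(* Let $\mathbf A\in\mathbb R^{m\times n}$, $\mathbf b\in\mathbb R^m$, $\sigma\ge 0$, and let $\mathbf x^0\in\mathbb R^n$ be an arbitrary vector with $\|\mathbf A\mathbf x^0-\mathbf b\|_2\le\sigma$. Let $\mathcal S$ be the set of indices of the $k$ largest components of $\mathbf x^0$ in magnitude and $\mathcal Z=\{1,\dots,n\}\setminus\mathcal S$. Let $\alpha>\|\mathbf x^0_{\mathcal Z}\|_\infty$ and let $\mathbf x^*$ be the solution of problem (P3). Then $\mathbf h:=\mathbf x^*-\mathbf x^0$ satisfies $$\|\mathbf h_{\mathcal Z}\|_1\le C_3\|\mathbf h_{\mathcal S}\|_1+C_4\|\mathbf x^0_{\mathcal Z}\|_1,\qquad C_3:=\frac{\alpha+\|\mathbf x^0_{\mathcal S}\|_\infty}{\alpha-\|\mathbf x^0_{\mathcal Z}\|_\infty},\quad C_4:=\frac{2\alpha}{\alpha-\|\mathbf x^0_{\mathcal Z}\|_\infty}.$$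
   Context: Problem (P3) is $\min_{\mathbf x\in\mathbb R^n}\{\|\mathbf x\|_1+\frac{1}{2\alpha}\|\mathbf x\|_2^2:\ \|\mathbf A\mathbf x-\mathbf b\|_2\le\sigma\}$ (its solution is unique by strict convexity). For a vector $\mathbf h$ and index set $\mathcal S$, $\mathbf h_{\mathcal S}$ denotes the restriction of $\mathbf h$ to the coordinates in $\mathcal S$. *)

(* vectors in R^n are column vectors 'cV[R]_n over a real
   closed field R (the paper's R^n is the case R = reals). *)
From HB Require Import structures.
From mathcomp Require Import all_boot all_order all_algebra.
Set Implicit Arguments. Unset Strict Implicit. Unset Printing Implicit Defensive.
Import Order.TTheory GRing.Theory Num.Theory.
Local Open Scope ring_scope.

Definition norm1_on (R : numDomainType) (n : nat) (S : {set 'I_n}) (x : 'cV[R]_n) : R :=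
  \sum_(i in S) `|x i 0|.

Definition norm1 (R : numDomainType) (n : nat) (x : 'cV[R]_n) : R :=
  \sum_i `|x i 0|.

(* ||x_S||_inf (= 0 if S is empty) *)
Definition norminf_on (R : numDomainType) (n : nat) (S : {set 'I_n}) (x : 'cV[R]_n) : R :=
  \big[Num.max/0]_(i in S) `|x i 0|.

Definition norm2 (R : rcfType) (m : nat) (v : 'cV[R]_m) : R :=
  Num.sqrt (\sum_i (v i 0) ^+ 2).

Definition P3_obj (R : rcfType) (n : nat) (alpha : R) (x : 'cV[R]_n) : R :=
  norm1 x + (2 * alpha)^-1 * (norm2 x) ^+ 2.

Definition P3_feasible (R : rcfType) (m n : nat) (A : 'M[R]_(m, n)) (b : 'cV[R]_m)
  (sigma : R) (x : 'cV[R]_n) : Prop :=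
  norm2 (A *m x - b) <= sigma.

Definition P3_solution (R : rcfType) (m n : nat) (A : 'M[R]_(m, n)) (b : 'cV[R]_m)
  (sigma alpha : R) (x : 'cV[R]_n) : Prop :=
  P3_feasible A b sigma x /\
  forall y : 'cV[R]_n, P3_feasible A b sigma y -> P3_obj alpha x <= P3_obj alpha y.

Definition largest_k_support (R : numDomainType) (n : nat) (k : nat)
  (x0 : 'cV[R]_n) (S : {set 'I_n}) : Prop :=
  #|S| = k /\ forall i j, i \in S -> j \notin S -> `|x0 j 0| <= `|x0 i 0|.

From HB Require Import structures.
From mathcomp Require Import all_boot all_order all_algebra.
From mathcomp Require Import ring lra.
Import Order.TTheory GRing.Theory Num.Theory.
Local Open Scope ring_scope.

(* The (P3) objective is separable: P3_obj alpha x = \sum_i pen alpha (x_i)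
   with pen alpha t = |t| + t^2/(2 alpha).  Since x0 is feasible, optimality of
   x* gives \sum_i (pen (x0_i + h_i) - pen x0_i) <= 0 for h = x* - x0.
   Each increment is bounded below coordinatewise: after scaling by alpha,
     alpha (pen (x + h) - pen x) >= alpha (|x + h| - |x|) - |x| |h|,
   and the reverse triangle inequality turns this into
     -(alpha + s) |h|            when |x| <= s  (coordinates in S),
     (alpha - a) |h| - 2 alpha |x|   when |x| <= a  (coordinates off S).
   Summing over S and its complement, with s = ||x0_S||_inf and
   a = ||x0_Z||_inf, yields the cone inequality
     (alpha - a) ||h_Z||_1 <= (alpha + s) ||h_S||_1 + 2 alpha ||x0_Z||_1,
   valid for any index set S; dividing by alpha - a > 0 gives the theorem. *)

Lemma norminf_on_ge {R : realDomainType} {n} (S : {set 'I_n}) (x : 'cV[R]_n) i :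
  i \in S -> `|x i 0| <= norminf_on S x.
Proof. by move=> iS; apply: (le_bigmax_cond 0 (fun j => `|x j 0|) iS). Qed.

Lemma norminf_on_ge0 {R : realDomainType} {n} (S : {set 'I_n}) (x : 'cV[R]_n) :
  0 <= norminf_on S x.
Proof. by rewrite /norminf_on; elim/big_ind: _ => // u v u0 _; rewrite le_max u0. Qed.

Definition pen {R : rcfType} (alpha t : R) : R := `|t| + (2 * alpha)^-1 * t ^+ 2.

Lemma P3_obj_sum (R : rcfType) n (alpha : R) (x : 'cV[R]_n) :
  P3_obj alpha x = \sum_i pen alpha (x i 0).
Proof.
rewrite /P3_obj /norm2 sqr_sqrtr; last by apply: sumr_ge0 => i _; apply: sqr_ge0.
by rewrite /norm1 mulr_sumr -big_split.
Qed.

Section PenaltyIncrement.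
Variables (R : rcfType) (alpha : R).
Hypothesis alpha_gt0 : 0 < alpha.

(* The quadratic part contributes (2 x h + h^2)/2 >= -|x||h| after scaling. *)
Lemma pen_increment (x h : R) :
  alpha * (`|x + h| - `|x|) - `|x| * `|h| <= alpha * (pen alpha (x + h) - pen alpha x).
Proof.
have half : alpha * (2 * alpha)^-1 = 2^-1.
  by rewrite invfM mulrCA mulfV ?gt_eqF // mulr1.
have xh : - (`|x| * `|h|) <= x * h by rewrite -normrM lerNl -normrN ler_norm.
have -> : alpha * (pen alpha (x + h) - pen alpha x) =
    alpha * (`|x + h| - `|x|) + alpha * (2 * alpha)^-1 * ((x + h) ^+ 2 - x ^+ 2).
  by rewrite /pen; ring.
have -> : (x + h) ^+ 2 - x ^+ 2 = 2 * (x * h) + h ^+ 2 by ring.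
rewrite half; have := sqr_ge0 h; lra.
Qed.

Lemma pen_increment_large (x h s : R) : `|x| <= s ->
  - ((alpha + s) * `|h|) <= alpha * (pen alpha (x + h) - pen alpha x).
Proof.
move=> xs; apply: le_trans (pen_increment x h).
have := ler_wpM2r (normr_ge0 h) xs.
have := ler_wpM2l (ltW alpha_gt0) (lerB_normD x h).
nra.
Qed.

Lemma pen_increment_small (x h a : R) : `|x| <= a ->
  (alpha - a) * `|h| - 2 * alpha * `|x| <= alpha * (pen alpha (x + h) - pen alpha x).
Proof.
move=> xa; apply: le_trans (pen_increment x h).
have tri : `|h| - `|x| <= `|x + h| by rewrite (addrC x) lerB_normD.
have := ler_wpM2r (normr_ge0 h) xa.
have := ler_wpM2l (ltW alpha_gt0) tri.
nra.
Qed.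

End PenaltyIncrement.

Lemma P3_descent_cone {R : rcfType} {n} {alpha : R} (S : {set 'I_n}) {x0 xs : 'cV[R]_n} :
  0 < alpha -> P3_obj alpha xs <= P3_obj alpha x0 ->
  (alpha - norminf_on (~: S) x0) * norm1_on (~: S) (xs - x0) <=
  (alpha + norminf_on S x0) * norm1_on S (xs - x0) + 2 * alpha * norm1_on (~: S) x0.
Proof.
move=> alpha_gt0 descent; set h := xs - x0.
set a := norminf_on (~: S) x0; set s := norminf_on S x0.
pose incr i := alpha * (pen alpha (x0 i 0 + h i 0) - pen alpha (x0 i 0)).
have xsE i : xs i 0 = x0 i 0 + h i 0 by rewrite /h !mxE; ring.
have incr_le0 : \sum_i incr i <= 0.
  rewrite -mulr_sumr sumrB pmulr_rle0 // subr_le0.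
  by under eq_bigr => i _ do rewrite -xsE; rewrite -!P3_obj_sum.
have incr_ge : \sum_(i in S) - ((alpha + s) * `|h i 0|) +
    \sum_(i in ~: S) ((alpha - a) * `|h i 0| - 2 * alpha * `|x0 i 0|) <= \sum_i incr i.
  rewrite [X in _ <= X](bigID (mem S)) /=; apply: lerD.
    by apply: ler_sum => i iS; exact/pen_increment_large/norminf_on_ge.
  under [X in _ <= X]eq_bigl => i do rewrite -in_setC.
  by apply: ler_sum => i iZ; exact/pen_increment_small/norminf_on_ge.
move: (le_trans incr_ge incr_le0).
rewrite sumrN sumrB -!mulr_sumr /norm1_on; lra.
Qed.

Theorem mainTheorem3 (R : rcfType) (m n k : nat) (A : 'M[R]_(m, n)) (b : 'cV[R]_m)
  (sigma alpha : R) (x0 xs : 'cV[R]_n) (S : {set 'I_n}) :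
  0 <= sigma ->
  P3_feasible A b sigma x0 ->
  largest_k_support k x0 S ->
  norminf_on (~: S) x0 < alpha ->
  P3_solution A b sigma alpha xs ->
  let h := xs - x0 in
  let C3 := (alpha + norminf_on S x0) / (alpha - norminf_on (~: S) x0) in
  let C4 := (2 * alpha) / (alpha - norminf_on (~: S) x0) in
  norm1_on (~: S) h <= C3 * norm1_on S h + C4 * norm1_on (~: S) x0.
Proof.
move=> _ x0_feasible _ alpha_gt_a [_ xs_optimal] /=.
have gap_gt0 : 0 < alpha - norminf_on (~: S) x0 by rewrite subr_gt0.
have alpha_gt0 : 0 < alpha := le_lt_trans (norminf_on_ge0 (~: S) x0) alpha_gt_a.
have cone := P3_descent_cone S alpha_gt0 (xs_optimal _ x0_feasible).
rewrite -(ler_pM2l gap_gt0); apply: (le_trans cone).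
rewrite le_eqVlt; apply/orP; left; apply/eqP.
by field; rewrite gt_eqF.
Qed.
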